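(* For every angle $0<\alpha<\pi$ there is $p_0(\alpha)$ such that for every prime $p>p_0(\alpha)$ the isosceles triangle whose angle at the apex (between the two equal sides) equals $\alpha$ is Euclidean sub-$p$-toral.
   Context: A $p$-torus is a group isomorphic to $(\mathbb{Z}_p)^\alpha$ for some $\alpha\ge1$. A set $X\subset\mathbb{R}^k$ is Euclidean sub-$p$-toral if there exist $n\ge k$, a $p$-torus $G$ and an action of $G$ on $\mathbb{R}^n$ by isometries such that $X$ (viewed in $\mathbb{R}^n$ via the standard inclusion $\mathbb{R}^k\subset\mathbb{R}^n$) is contained in a single $G$-orbit. A triangle is identified with its set of three vertices; being sub-$p$-toral is invariant under isometries. *)

From HB Require Import structures.
From mathcomp Require Import all_boot all_order all_algebra.
From mathcomp Require Import all_classical all_reals all_analysis.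
Set Implicit Arguments. Unset Strict Implicit. Unset Printing Implicit Defensive.
Import Order.TTheory GRing.Theory Num.Theory.
Local Open Scope ring_scope.
Local Open Scope classical_set_scope.

Section Defs.
Variable R : realType.

Definition dotp (n : nat) (x y : 'rV[R]_n) : R := \sum_(i < n) x 0 i * y 0 i.
Definition euclid_dist (n : nat) (x y : 'rV[R]_n) : R := Num.sqrt (dotp (x - y) (x - y)).

Definition angle_at (n : nat) (a b c : 'rV[R]_n) : R :=
  acos (dotp (b - a) (c - a) / (euclid_dist b a * euclid_dist c a)).

Definition std_incl (k n : nat) (y : 'rV[R]_k) : 'rV[R]_n :=
  \row_(i < n) oapp (fun j : 'I_k => y 0 j) 0 (insub (nat_of_ord i)).

Definition isometric_action (G : zmodType) (n : nat) (act : G -> 'rV[R]_n -> 'rV[R]_n) : Prop :=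
  [/\ (forall x, act 0 x = x),
      (forall g h x, act (g + h) x = act g (act h x)) &
      (forall g x y, euclid_dist (act g x) (act g y) = euclid_dist x y)].

(* X is Euclidean sub-p-toral: the p-torus (Z_p)^alpha, alpha >= 1, realised
   concretely as {ffun 'I_alpha -> 'Z_p} (used only for prime p) *)
Definition euclidean_sub_p_toral (p k : nat) (X : set 'rV[R]_k) : Prop :=
  exists (n : nat) (alpha : nat)
         (act : {ffun 'I_alpha -> 'Z_p} -> 'rV[R]_n -> 'rV[R]_n),
    [/\ (k <= n)%N, (1 <= alpha)%N, isometric_action act &
        exists x0 : 'rV[R]_n, forall y, X y -> exists g, act g x0 = std_incl n y].

End Defs.

From HB Require Import structures.
From mathcomp Require Import all_boot all_order all_algebra.
From mathcomp Require Import all_classical all_reals all_analysis.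
From mathcomp Require Import ring lra.
Import Order.TTheory GRing.Theory Num.Theory.
Set Implicit Arguments. Unset Strict Implicit. Unset Printing Implicit Defensive.
Local Open Scope ring_scope.
Local Open Scope classical_set_scope.

(* The group (Z_p)^2 acts isometrically on R^(k+2) by rotating two orthogonal
   planes span(X, Y) and span(Z, W) through multiples of theta = 2 pi / p
   about a centre z.  The orbit of z + x X + y Z contains its images under
   (1, 1) and (-1, 1), which differ from it by P + Q and P - Q, where
   Q = x sin(theta) Y and P = x (cos theta - 1) X + y (cos theta - 1) Z
   + y sin(theta) W.  For an isosceles triangle with legs u = b - a and
   v = c - a it thus suffices to write (u + v) / 2 and (u - v) / 2 in this
   form, using two spare dimensions.  The second determines x; the first then
   leaves room for y exactly when |P|^2 >= (1 - cos theta)^2 x^2, which unwinds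
   to cos theta >= - cos alpha, i.e. theta <= pi - alpha: true for p large. *)

Section DotProduct.
Variables (R : realType) (n : nat).
Implicit Types x y z : 'rV[R]_n.

Lemma dotpC x y : dotp x y = dotp y x.
Proof. by apply: eq_bigr => i _; rewrite mulrC. Qed.

Lemma dotpDl x y z : dotp (x + y) z = dotp x z + dotp y z.
Proof. by rewrite /dotp -big_split; apply: eq_bigr => i _; rewrite mxE mulrDl. Qed.

Lemma dotpZl a x y : dotp (a *: x) y = a * dotp x y.
Proof. by rewrite /dotp mulr_sumr; apply: eq_bigr => i _; rewrite mxE mulrA. Qed.

Lemma dotpNl x y : dotp (- x) y = - dotp x y.
Proof. by rewrite -scaleN1r dotpZl mulN1r. Qed.

Lemma dotpBl x y z : dotp (x - y) z = dotp x z - dotp y z.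
Proof. by rewrite dotpDl dotpNl. Qed.

Lemma dotpDr x y z : dotp x (y + z) = dotp x y + dotp x z.
Proof. by rewrite !(dotpC x) dotpDl. Qed.

Lemma dotpZr a x y : dotp x (a *: y) = a * dotp x y.
Proof. by rewrite !(dotpC x) dotpZl. Qed.

Lemma dotpNr x y : dotp x (- y) = - dotp x y.
Proof. by rewrite !(dotpC x) dotpNl. Qed.

Lemma dotpBr x y z : dotp x (y - z) = dotp x y - dotp x z.
Proof. by rewrite dotpDr dotpNr. Qed.

Lemma dotpxx_ge0 x : 0 <= dotp x x.
Proof. by apply: sumr_ge0 => i _; rewrite -expr2 sqr_ge0. Qed.

Lemma dotpxx_eq0 x : (dotp x x == 0) = (x == 0).
Proof.
apply/idP/eqP => [|->]; last by rewrite /dotp big1 // => i _; rewrite mxE mul0r.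
rewrite psumr_eq0 => [/allP x0|i _]; last by rewrite -expr2 sqr_ge0.
apply/rowP => i; apply/eqP; rewrite mxE -sqrf_eq0 expr2.
exact: x0 (mem_index_enum i).
Qed.

Lemma dotp_delta x (j : 'I_n) : dotp x (delta_mx 0 j) = x 0 j.
Proof.
rewrite /dotp (bigD1 j) //= big1 => [|i /negPf ij]; last by rewrite mxE ij andbF mulr0.
by rewrite mxE !eqxx mulr1 addr0.
Qed.

End DotProduct.

Ltac dotp_expand :=
  rewrite ?(dotpDl, dotpDr, dotpBl, dotpBr, dotpZl, dotpZr, dotpNl, dotpNr).

Lemma dotp_isosceles_bound (R : realType) n (x y : 'rV[R]_n) :
  dotp y y = dotp x x -> - dotp x x <= dotp x y <= dotp x x.
Proof.
move=> yy; have := dotpxx_ge0 (x + y); have := dotpxx_ge0 (x - y).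
dotp_expand; rewrite yy (dotpC y x); lra.
Qed.

Section PlaneRotation.
Variables (R : realType) (n : nat).
Implicit Types x y X Y : 'rV[R]_n.

(* For orthonormal X, Y: rotation by phi in the plane spanned by X and Y,
   fixing its orthogonal complement. *)
Definition plane_rot X Y (phi : R) x : 'rV[R]_n :=
  x + (((cos phi - 1) * dotp x X - sin phi * dotp x Y) *: X
       + ((cos phi - 1) * dotp x Y + sin phi * dotp x X) *: Y).

Lemma plane_rot0 X Y x : plane_rot X Y 0 x = x.
Proof. by rewrite /plane_rot cos0 sin0 subrr !mul0r subr0 add0r !scale0r !addr0. Qed.

Lemma plane_rotB X Y phi x y :
  plane_rot X Y phi (x - y) = plane_rot X Y phi x - plane_rot X Y phi y.
Proof. rewrite /plane_rot; dotp_expand; apply/rowP => i; rewrite !mxE; ring. Qed.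

Lemma plane_rot_periodic X Y phi m x :
  plane_rot X Y (phi + pi *+ 2 *+ m) x = plane_rot X Y phi x.
Proof. by rewrite /plane_rot (periodicn (@cosD2pi R)) (periodicn (@sinD2pi R)). Qed.

Lemma plane_rot_orthogonal X Y Z phi x :
  dotp X Z = 0 -> dotp Y Z = 0 -> dotp (plane_rot X Y phi x) Z = dotp x Z.
Proof. by move=> XZ YZ; rewrite /plane_rot; dotp_expand; rewrite XZ YZ !mulr0 !addr0. Qed.

Variables X Y : 'rV[R]_n.
Hypotheses (XX : dotp X X = 1) (YY : dotp Y Y = 1) (XY : dotp X Y = 0).

Lemma plane_rotD phi psi x :
  plane_rot X Y phi (plane_rot X Y psi x) = plane_rot X Y (phi + psi) x.
Proof.
have YX : dotp Y X = 0 by rewrite dotpC.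
rewrite {1}/plane_rot; dotp_expand; rewrite XX YY XY YX /plane_rot cosD sinD.
apply/rowP => i; rewrite !mxE; ring.
Qed.

Lemma plane_rot_norm phi x : dotp (plane_rot X Y phi x) (plane_rot X Y phi x) = dotp x x.
Proof.
have YX : dotp Y X = 0 by rewrite dotpC.
rewrite /plane_rot; dotp_expand; rewrite XX YY XY YX (dotpC X x) (dotpC Y x).
have := cos2Dsin2 phi; move: (cos phi) (sin phi) (dotp x X) (dotp x Y) => c s a b cs.
apply/eqP; rewrite -subr_eq0; apply/eqP.
by transitivity ((c ^+ 2 + s ^+ 2 - 1) * (a ^+ 2 + b ^+ 2)); [ring | rewrite cs subrr mul0r].
Qed.

End PlaneRotation.

Lemma plane_rotC (R : realType) n (X Y Z W : 'rV[R]_n) phi psi x :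
  dotp X Z = 0 -> dotp X W = 0 -> dotp Y Z = 0 -> dotp Y W = 0 ->
  plane_rot X Y phi (plane_rot Z W psi x) = plane_rot Z W psi (plane_rot X Y phi x).
Proof.
move=> XZ XW YZ YW; have ZX : dotp Z X = 0 by rewrite dotpC.
have WX : dotp W X = 0 by rewrite dotpC.
have ZY : dotp Z Y = 0 by rewrite dotpC.
have WY : dotp W Y = 0 by rewrite dotpC.
rewrite {1}/plane_rot !(plane_rot_orthogonal _ _ ZX WX) !(plane_rot_orthogonal _ _ ZY WY).
rewrite [RHS]/plane_rot !(plane_rot_orthogonal _ _ XZ YZ) !(plane_rot_orthogonal _ _ XW YW).
rewrite /plane_rot; apply/rowP => i; rewrite !mxE; ring.
Qed.

Section StandardInclusion.
Variables (R : realType) (k n : nat).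
Implicit Types x y : 'rV[R]_k.

Lemma std_incl_lt y (i : 'I_n) (j : 'I_k) : val i = val j -> std_incl n y 0 i = y 0 j.
Proof.
move=> ij; rewrite mxE; case: insubP => [j' _ j'i|] /=; last by rewrite ij ltn_ord.
by congr (y 0 _); apply: val_inj; rewrite j'i ij.
Qed.

Lemma std_incl_ge y (i : 'I_n) : (k <= i)%N -> std_incl n y 0 i = 0.
Proof.
move=> ki; rewrite mxE; case: insubP => [j _ ji|] //=.
by move: (ltn_ord j); rewrite ji ltnNge ki.
Qed.

Lemma std_inclB x y : std_incl n (x - y) = std_incl n x - std_incl n y.
Proof. by apply/rowP => i; rewrite !mxE; case: insubP => [j _ _|_] /=; rewrite ?mxE ?subr0. Qed.

Lemma dotp_std_incl x y : (k <= n)%N -> dotp (std_incl n x) (std_incl n y) = dotp x y.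
Proof.
move=> kn; rewrite /dotp (bigID (fun i : 'I_n => (i < k)%N)) /= [X in _ + X]big1 => [|i].
  rewrite addr0 (big_ord_narrow kn); apply: eq_bigr => i _.
  by rewrite !(std_incl_lt _ (j := i)).
by rewrite -leqNgt => /std_incl_ge ->; rewrite mul0r.
Qed.

Lemma dotp_std_incl_delta y (j : 'I_n) :
  (k <= j)%N -> dotp (std_incl n y) (delta_mx 0 j) = 0.
Proof. by move=> kj; rewrite dotp_delta std_incl_ge. Qed.

End StandardInclusion.

Definition theta (R : realType) (p : nat) : R := pi *+ 2 / p%:R.
Arguments theta {R}.

Definition orthonormal4 (R : realType) n (X Y Z W : 'rV[R]_n) :=
  [/\ [/\ dotp X X = 1, dotp Y Y = 1, dotp Z Z = 1 & dotp W W = 1],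
      [/\ dotp X Y = 0, dotp X Z = 0 & dotp X W = 0] &
      [/\ dotp Y Z = 0, dotp Y W = 0 & dotp Z W = 0]].

(* Relative to a centre z, the image of z + x X + y Z under the rotations of
   the planes (X, Y) and (Z, W) by phi and psi. *)
Definition torus_point (R : realType) n (X Y Z W : 'rV[R]_n) (x y phi psi : R) :=
  (x * cos phi) *: X + (x * sin phi) *: Y + (y * cos psi) *: Z + (y * sin psi) *: W.

Section TorusAction.
Variables (R : realType) (n p : nat) (X Y Z W z : 'rV[R]_n).
Hypothesis p_gt1 : (1 < p)%N.
Hypotheses (XX : dotp X X = 1) (YY : dotp Y Y = 1) (ZZ : dotp Z Z = 1)
  (WW : dotp W W = 1) (XY : dotp X Y = 0) (XZ : dotp X Z = 0) (XW : dotp X W = 0)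
  (YZ : dotp Y Z = 0) (YW : dotp Y W = 0) (ZW : dotp Z W = 0).

Definition torus_act (g : {ffun 'I_2 -> 'Z_p}) x :=
  z + plane_rot X Y (theta p * (g ord0)%:R)
        (plane_rot Z W (theta p * (g ord_max)%:R) (x - z)).

Lemma plane_rot_theta_mod (A B : 'rV[R]_n) k x :
  plane_rot A B (theta p * (k %% p)%:R) x = plane_rot A B (theta p * k%:R) x.
Proof.
have p0 : p%:R != 0 :> R by rewrite pnatr_eq0 -leqn0 -ltnNge ltnW.
rewrite -(plane_rot_periodic _ _ _ (k %/ p)); congr plane_rot.
by rewrite [in RHS](divn_eq k p) natrD natrM /theta; field.
Qed.

Lemma torus_actD g h x : torus_act (g + h) x = torus_act g (torus_act h x).
Proof.
have modZp k : (k %% (Zp_trunc p).+2 = k %% p)%N by rewrite Zp_cast.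
rewrite /torus_act !ffunE /= !modZp !plane_rot_theta_mod addrAC subrr add0r.
rewrite -(plane_rotC _ _ _ XZ XW YZ YW) (plane_rotD XX YY XY) (plane_rotD ZZ WW ZW).
by rewrite !natrD !mulrDr.
Qed.

Lemma torus_act_isometric : isometric_action torus_act.
Proof.
split=> [x | | g x y]; first by rewrite /torus_act !ffunE !mulr0 !plane_rot0 addrC subrK.
  exact: torus_actD.
rewrite /euclid_dist /torus_act opprD addrACA subrr add0r -!plane_rotB.
by rewrite (plane_rot_norm XX YY XY) (plane_rot_norm ZZ WW ZW) opprB addrA subrK.
Qed.

Lemma torus_act_point g x y :
  torus_act g (z + torus_point X Y Z W x y 0 0) =
  z + torus_point X Y Z W x y (theta p * (g ord0)%:R) (theta p * (g ord_max)%:R).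
Proof.
have [YX ZX WX] : [/\ dotp Y X = 0, dotp Z X = 0 & dotp W X = 0] by rewrite !(dotpC _ X).
have [ZY WY WZ] : [/\ dotp Z Y = 0, dotp W Y = 0 & dotp W Z = 0].
  by rewrite (dotpC Z Y) (dotpC W Y) (dotpC W Z).
rewrite /torus_act addrAC subrr add0r /torus_point cos0 sin0 /plane_rot; dotp_expand.
rewrite XX YY ZZ WW XY XZ XW YZ YW ZW YX ZX WX ZY WY WZ.
by apply/rowP => i; rewrite !mxE; ring.
Qed.

Lemma theta_mulN1 : theta p * (val (-1 : 'Z_p))%:R = - theta p + pi *+ 2 :> R.
Proof.
rewrite /= !modn_small // subn1 /= /theta -[p in p%:R](Zp_cast p_gt1).
by rewrite -[((Zp_trunc p).+2)%:R]natr1; field; rewrite nat1r natr1 pnatr_eq0.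
Qed.

End TorusAction.

Lemma sub_p_toral_of_torus_frame (R : realType) (p k n : nat) (a b c : 'rV[R]_k)
    (X Y Z W : 'rV[R]_n) (x y : R) :
  (1 < p)%N -> (k <= n)%N -> orthonormal4 X Y Z W ->
  std_incl n (b - a) =
    torus_point X Y Z W x y (theta p) (theta p) - torus_point X Y Z W x y 0 0 ->
  std_incl n (c - a) =
    torus_point X Y Z W x y (- theta p) (theta p) - torus_point X Y Z W x y 0 0 ->
  euclidean_sub_p_toral p [set a; b; c].
Proof.
move=> p_gt1 kn [[XX YY ZZ WW] [XY XZ XW] [YZ YW ZW]]; rewrite !std_inclB => eb ec.
set z := std_incl n a - torus_point X Y Z W x y 0 0.
have ea : std_incl n a = z + torus_point X Y Z W x y 0 0 by rewrite subrK.
have vertex (v : 'rV[R]_k) phi psi : std_incl n v - std_incl n a =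
    torus_point X Y Z W x y phi psi - torus_point X Y Z W x y 0 0 ->
  std_incl n v = z + torus_point X Y Z W x y phi psi.
  by move=> ev; rewrite -(subrK (std_incl n a) (std_incl n v)) ev ea addrCA subrK.
have iso := torus_act_isometric z p_gt1 XX YY ZZ WW XY XZ XW YZ YW ZW.
have act := torus_act_point z XX YY ZZ WW XY XZ XW YZ YW ZW.
exists n, 2%N, (torus_act X Y Z W z); split => //.
exists (std_incl n a) => _ [[->|->]|->].
- by case: iso => act0 _ _; exists 0; rewrite act0.
- by exists [ffun => 1]; rewrite (vertex _ _ _ eb) ea act !ffunE /= modn_small // mulr1.
- exists [ffun i => if i == ord0 then -1 else 1].
  rewrite (vertex _ _ _ ec) ea act !ffunE /= theta_mulN1 // modn_small // mulr1.
  by rewrite /torus_point cosD2pi sinD2pi.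
Qed.

Section Frames.
Variables (R : realType) (n : nat).

Lemma exists_orthonormal_pair (P f : 'rV[R]_n) (a b : R) :
  dotp P f = 0 -> dotp f f = 1 -> 0 < dotp P P -> a ^+ 2 + b ^+ 2 = dotp P P ->
  exists X V : 'rV[R]_n, [/\ dotp X X = 1, dotp V V = 1, dotp X V = 0,
    a *: X + b *: V = P &
    forall w, dotp P w = 0 -> dotp f w = 0 -> dotp X w = 0 /\ dotp V w = 0].
Proof.
move=> Pf ff PP_gt0 abP; have fP : dotp f P = 0 by rewrite dotpC.
have [h h_gt0 hh] : exists2 h, 0 < h & h ^+ 2 = dotp P P.
  by exists (Num.sqrt (dotp P P)); rewrite ?sqrtr_gt0 ?sqr_sqrtr ?ltW.
have h0 : h != 0 by rewrite gt_eqF.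
rewrite -hh in abP.
exists ((a / dotp P P) *: P - (b / h) *: f), ((b / dotp P P) *: P + (a / h) *: f).
split=> [|||| w Pw fw].
- dotp_expand; rewrite Pf fP ff -hh.
  by transitivity ((a ^+ 2 + b ^+ 2) / h ^+ 2); [field | rewrite abP divff ?sqrf_eq0].
- dotp_expand; rewrite Pf fP ff -hh.
  by transitivity ((a ^+ 2 + b ^+ 2) / h ^+ 2); [field | rewrite abP divff ?sqrf_eq0].
- by dotp_expand; rewrite Pf fP ff -hh; field.
- transitivity (((a ^+ 2 + b ^+ 2) / h ^+ 2) *: P + 0 *: f).
    by rewrite hh; apply/rowP => i; rewrite !mxE; ring.
  by rewrite abP divff ?sqrf_eq0 // scale1r scale0r addr0.
- by dotp_expand; rewrite Pw fw !mulr0 subrr addr0.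
Qed.

Lemma exists_torus_frame (P Q f1 f2 : 'rV[R]_n) (phi : R) :
  dotp P Q = 0 -> dotp P f1 = 0 -> dotp P f2 = 0 -> dotp Q f1 = 0 -> dotp Q f2 = 0 ->
  dotp f1 f1 = 1 -> dotp f2 f2 = 1 -> dotp f1 f2 = 0 ->
  0 < dotp P P -> 0 < dotp Q Q -> 0 < sin phi ->
  dotp Q Q * (1 - cos phi) <= dotp P P * (1 + cos phi) ->
  exists X Y Z W : 'rV[R]_n, orthonormal4 X Y Z W /\ exists x y : R,
    torus_point X Y Z W x y phi phi - torus_point X Y Z W x y 0 0 = P + Q /\
    torus_point X Y Z W x y (- phi) phi - torus_point X Y Z W x y 0 0 = P - Q.
Proof.
move=> PQ Pf1 Pf2 Qf1 Qf2 f11 f22 f12 PP_gt0 QQ_gt0 s_gt0 PQ_le.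
have cs := cos2Dsin2 phi; set c := cos phi in cs PQ_le *; set s := sin phi in cs s_gt0 *.
have [s0 s2] : s != 0 /\ s ^+ 2 = (1 - c) * (1 + c) by rewrite gt_eqF //; split=> //; nra.
have [c_lt1 c_gtN1] : c < 1 /\ 0 < 1 + c by split; nra.
have [q q_gt0 qq] : exists2 q, 0 < q & q ^+ 2 = dotp Q Q.
  by exists (Num.sqrt (dotp Q Q)); rewrite ?sqrtr_gt0 ?sqr_sqrtr ?ltW.
have q0 : q != 0 by rewrite gt_eqF.
pose x := q / s; pose Y := q^-1 *: Q.
have YY : dotp Y Y = 1 by dotp_expand; rewrite -qq; field.
have PY : dotp P Y = 0 by dotp_expand; rewrite PQ mulr0.
have f1Y : dotp f1 Y = 0 by dotp_expand; rewrite dotpC Qf1 mulr0.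
have f2Y : dotp f2 Y = 0 by dotp_expand; rewrite dotpC Qf2 mulr0.
pose a := (c - 1) * x.
have aP : a ^+ 2 <= dotp P P.
  rewrite -(ler_pM2r c_gtN1); apply: le_trans PQ_le; rewrite -qq le_eqVlt; apply/orP; left.
  apply/eqP; rewrite /a /x exprMn expr_div_n s2; field.
  by rewrite !gt_eqF // subr_gt0.
pose b := Num.sqrt (dotp P P - a ^+ 2).
have abP : a ^+ 2 + b ^+ 2 = dotp P P by rewrite sqr_sqrtr ?subr_ge0 // addrC subrK.
have [X [V [XX VV XV eP XV_perp]]] := exists_orthonormal_pair Pf1 f11 PP_gt0 abP.
have [[Xf2 Vf2] [XY VY]] := (XV_perp f2 Pf2 f12, XV_perp Y PY f1Y).
pose L := Num.sqrt ((c - 1) ^+ 2 + s ^+ 2).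
have L_gt0 : 0 < L by rewrite sqrtr_gt0; nra.
have L0 : L != 0 by rewrite gt_eqF.
have LV_f2 : dotp (L *: V) f2 = 0 by rewrite dotpZl Vf2 mulr0.
have LV_gt0 : 0 < dotp (L *: V) (L *: V) by rewrite dotpZl dotpZr VV mulr1 mulr_gt0.
have csL : (c - 1) ^+ 2 + s ^+ 2 = dotp (L *: V) (L *: V).
  by rewrite dotpZl dotpZr VV mulr1 -expr2 sqr_sqrtr //; nra.
have [Z [W [ZZ WW ZW eV ZW_perp]]] := exists_orthonormal_pair LV_f2 f22 LV_gt0 csL.
have [XZ XW] : dotp X Z = 0 /\ dotp X W = 0.
  by rewrite !(dotpC X); apply: ZW_perp; rewrite ?dotpZl 1?dotpC ?XV ?mulr0.
have [YZ YW] : dotp Y Z = 0 /\ dotp Y W = 0.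
  by rewrite !(dotpC Y); apply: ZW_perp; rewrite ?dotpZl ?VY ?mulr0.
exists X, Y, Z, W; split=> //; exists x, (b / L).
have {}eV : V = L^-1 *: ((c - 1) *: Z + s *: W) by rewrite eV scalerA mulVf // scale1r.
rewrite -eP eV /Y /torus_point cos0 sin0 cosN sinN -/c -/s /a /x.
by split; apply/rowP => i; rewrite !mxE; field; rewrite L0 s0 q0.
Qed.

End Frames.

Lemma isosceles_torus_frame (R : realType) k (u v : 'rV[R]_k) (r phi : R) :
  0 < dotp u u -> dotp v v = dotp u u -> dotp u v = r * dotp u u -> -1 < r < 1 ->
  0 < sin phi -> - r <= cos phi ->
  exists X Y Z W : 'rV[R]_k.+2, orthonormal4 X Y Z W /\ exists x y : R,
    std_incl k.+2 u = torus_point X Y Z W x y phi phi - torus_point X Y Z W x y 0 0 /\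
    std_incl k.+2 v = torus_point X Y Z W x y (- phi) phi - torus_point X Y Z W x y 0 0.
Proof.
move=> uu_gt0 vv uv /andP[r_gtN1 r_lt1] s_gt0 r_le.
have k_le : (k <= k.+2)%N by rewrite leqW.
pose f1 : 'rV[R]_k.+2 := delta_mx 0 (inord k).
pose f2 : 'rV[R]_k.+2 := delta_mx 0 ord_max.
have [f11 f22 f12] : [/\ dotp f1 f1 = 1, dotp f2 f2 = 1 & dotp f1 f2 = 0].
  by rewrite !dotp_delta !mxE !eqxx /= -(inj_eq val_inj) /= inordK ?gtn_eqF.
set u' := std_incl k.+2 u; set v' := std_incl k.+2 v.
have [u'f1 u'f2 v'f1 v'f2] :
    [/\ dotp u' f1 = 0, dotp u' f2 = 0, dotp v' f1 = 0 & dotp v' f2 = 0].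
  by rewrite !dotp_std_incl_delta //= inordK.
have [u'u' v'v' u'v' v'u'] : [/\ dotp u' u' = dotp u u, dotp v' v' = dotp u u,
    dotp u' v' = r * dotp u u & dotp v' u' = r * dotp u u].
  by rewrite !dotp_std_incl // vv (dotpC v) uv.
pose P := 2^-1 *: (u' + v'); pose Q := 2^-1 *: (u' - v').
have [PQ PP QQ] : [/\ dotp P Q = 0, dotp P P = dotp u u * (1 + r) / 2
    & dotp Q Q = dotp u u * (1 - r) / 2].
  by split; dotp_expand; rewrite u'u' v'v' u'v' v'u'; field.
have [Pf1 Pf2 Qf1 Qf2] :
    [/\ dotp P f1 = 0, dotp P f2 = 0, dotp Q f1 = 0 & dotp Q f2 = 0].
  by split; dotp_expand; rewrite ?u'f1 ?u'f2 ?v'f1 ?v'f2 ?subrr ?addr0 mulr0.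
have PP_gt0 : 0 < dotp P P by rewrite PP; apply: divr_gt0 => //; nra.
have QQ_gt0 : 0 < dotp Q Q by rewrite QQ; apply: divr_gt0 => //; nra.
have PQ_le : dotp Q Q * (1 - cos phi) <= dotp P P * (1 + cos phi) by rewrite PP QQ; nra.
have [X [Y [Z [W [XYZW [x [y [eu ev]]]]]]]] :=
  exists_torus_frame PQ Pf1 Pf2 Qf1 Qf2 f11 f22 f12 PP_gt0 QQ_gt0 s_gt0 PQ_le.
exists X, Y, Z, W; split=> //; exists x, y; rewrite eu ev /P /Q.
by split; apply/rowP => i; rewrite !mxE; field.
Qed.

Lemma isosceles_dotp (R : realType) k (a b c : 'rV[R]_k) :
  b != a -> euclid_dist b a = euclid_dist c a ->
  [/\ 0 < dotp (b - a) (b - a), dotp (c - a) (c - a) = dotp (b - a) (b - a) &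
      dotp (b - a) (c - a) = cos (angle_at a b c) * dotp (b - a) (b - a)].
Proof.
move=> ba; rewrite /angle_at /euclid_dist => d_eq.
set u := b - a in d_eq *; set v := c - a in d_eq *.
have vv : dotp v v = dotp u u.
  by rewrite -(sqr_sqrtr (dotpxx_ge0 u)) d_eq sqr_sqrtr ?dotpxx_ge0.
have uu_gt0 : 0 < dotp u u by rewrite lt_def dotpxx_eq0 subr_eq0 ba dotpxx_ge0.
split=> //; rewrite -d_eq -expr2 sqr_sqrtr ?dotpxx_ge0 // acosK ?divfK ?gt_eqF //.
by rewrite in_itv /= ler_pdivrMr ?ler_pdivlMr // mulN1r mul1r; apply: dotp_isosceles_bound.
Qed.

Lemma theta_eventually_le (R : realType) (alpha : R) : alpha < pi ->
  exists p0 : nat, forall p, (p0 < p)%N -> (0 : R) < theta p <= pi - alpha.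
Proof.
move=> alpha_lt; have pa : 0 < pi - alpha by rewrite subr_gt0.
exists (Num.truncn (pi *+ 2 / (pi - alpha))) => p p0p.
have p_gt0 : (0 : R) < p%:R by rewrite ltr0n (leq_ltn_trans _ p0p).
have lt_p : pi *+ 2 / (pi - alpha) < p%:R.
  by apply: lt_le_trans (truncnS_gt _) _; rewrite ler_nat.
rewrite /theta; apply/andP; split; first by rewrite divr_gt0 // mulrn_wgt0 // pi_gt0.
by rewrite ler_pdivrMr // mulrC -ler_pdivrMr // ltW.
Qed.

Lemma cos_gtN1_lt1 (R : realType) (x : R) : 0 < x < pi -> -1 < cos x < 1.
Proof. by move=> /sin_gt0_pi s_gt0; have cs := cos2Dsin2 x; apply/andP; split; nra. Qed.

Lemma cosN_le_cos (R : realType) (alpha phi : R) :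
  0 <= alpha <= pi -> 0 <= phi <= pi - alpha -> - cos alpha <= cos phi.
Proof.
move=> /andP[alpha_ge0 alpha_le] /andP[phi_ge0 phi_le].
have -> : - cos alpha = cos (pi - alpha) by rewrite cosB cospi sinpi mul0r addr0 mulN1r.
have pa_le : pi - alpha <= pi by rewrite gerBl.
rewrite leNgt ltr_cos ?in_itv /= -?leNgt ?phi_ge0 ?subr_ge0 ?alpha_le //=.
exact: le_trans pa_le.
Qed.

Unset Implicit Arguments.

Theorem lemma5 (R : realType) (alpha : R) :
  0 < alpha -> alpha < pi ->
  exists p0 : nat, forall p : nat, prime p -> (p0 < p)%N ->
    forall (k : nat) (a b c : 'rV[R]_k),
      b != a -> euclid_dist b a = euclid_dist c a ->
      angle_at a b c = alpha ->
      euclidean_sub_p_toral p [set a; b; c].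
Proof.
move=> alpha_gt0 alpha_lt; have [p0 theta_small] := theta_eventually_le alpha_lt.
exists p0 => p p_prime p0p k a b c ba d_eq angle.
have /andP[th_gt0 th_le] := theta_small p p0p.
have s_gt0 : 0 < sin (theta p : R).
  by apply: sin_gt0_pi; rewrite th_gt0 (le_lt_trans th_le) // gtrBl.
have cos_le : - cos alpha <= cos (theta p).
  by apply: cosN_le_cos; rewrite ?(ltW alpha_gt0) ?(ltW alpha_lt) ?(ltW th_gt0).
have [uu_gt0 vv uv] := isosceles_dotp ba d_eq; rewrite angle in uv.
have cos_bounds : -1 < cos alpha < 1 by apply: cos_gtN1_lt1; rewrite alpha_gt0.
have [X [Y [Z [W [XYZW [x [y [eb ec]]]]]]]] :=
  isosceles_torus_frame uu_gt0 vv uv cos_bounds s_gt0 cos_le.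
exact: sub_p_toral_of_torus_frame (prime_gt1 p_prime) (leqW (leqnSn k)) XYZW eb ec.
Qed.
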